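(* Consider the time-switching (TS) wireless powered multi-relay model described in the context, with the information beamformer (hence the matrices $\mathbf{A}$ and $\mathbf{B}$) fixed. Define $$\Omega=\Big\{(t,\gamma)\in\mathbb{R}^2 \;:\; \exists\,\mathbf{c}\in\mathbb{R}^N_{\ge 0},\ \exists\,\mathbf{W}_{\mathrm{e}}\succeq 0 \text{ such that } 0\le\gamma\le \frac{\mathbf{c}^T\mathbf{A}\mathbf{c}}{1+\mathbf{c}^T\mathbf{B}\mathbf{c}},\ t\in[0,1/2],$$ $$ c_n^2\,t\le (1-2t)\,\eta\,p_{\mathrm{o}}\,\mathbf{f}_n^H\mathbf{W}_{\mathrm{e}}\mathbf{f}_n\ \ \forall n\in\mathcal{N},\ \ \sup_{\mathbb{P}\in\mathcal{P}_m}\mathbb{P}\Big(\sum_{n\in\mathcal{N}}|z_{nm}|^2c_n^2\ge\bar\phi_m\Big)\le\zeta\ \ \forall m\in\mathcal{C}\Big\}.$$ Then $\Omega$ is normal, i.e., whenever $(t,\gamma)\in\Omega$ and $(t',\gamma')\in\mathbb{R}^2$ satisfies $0\le t'\le t$ and $0\le\gamma'\le\gamma$, we have $(t',\gamma')\in\Omega$.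
   Context: An access point (HAP) with $K$ antennas and fixed normalized transmit power $p_{\mathrm{o}}>0$ serves $N$ single-antenna relays, $\mathcal{N}=\{1,\dots,N\}$, which share spectrum with $M$ cellular users, $\mathcal{C}=\{1,\dots,M\}$. $\mathbf{f}_n\in\mathbb{C}^K$ is the channel from the HAP to relay $n$, $\mathbf{g}\in\mathbb{C}^N$ the channel from the relays to the receiver, $\eta\in(0,1]$ the energy conversion efficiency. For a fixed information beamformer $\mathbf{w}_1\in\mathbb{C}^K$, let $h_n=\mathbf{f}_n^H\mathbf{w}_1$, $\mathbf{H}=\mathrm{diag}\big(\tfrac{|h_n|^2}{1+p_{\mathrm{o}}|h_n|^2}\big)_{n}$, $\mathbf{B}=\mathrm{diag}\big(\tfrac{|g_n|^2}{1+p_{\mathrm{o}}|h_n|^2}\big)_{n}$, $\mathbf{G}=\mathbf{g}\mathbf{g}^H$, $\mathbf{A}=\mathbf{H}\mathbf{G}$. The vector $\mathbf{c}$ collects the square roots $c_n=\sqrt{p_n}$ of the relays' transmit powers, $\mathbf{W}_{\mathrm{e}}$ is the HAP's (Hermitian positive semidefinite) energy-beamforming covariance, and $t$ is the information-transmission time (the energy-harvesting time being $1-2t$). The channel $\mathbf{z}_m=(z_{1m},\dots,z_{Nm})^T\in\mathbb{C}^N$ from the relays to cellular user $m$ is random with unknown distribution; $\mathcal{P}_m$ is the set of all distributions of $\mathbf{z}_m$ with prescribed first-order moment $\mathbf{u}_m$ and second-order moment $\mathbf{S}_m$. $\bar\phi_m>0$ is the interference tolerance of cellular user $m$ and $\zeta\in(0,1)$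 the admissible violation probability. *)

From HB Require Import structures.
From mathcomp Require Import all_boot all_order all_algebra.
From mathcomp Require Import all_classical all_reals all_analysis.
From mathcomp.real_closed Require Import complex.
Set Implicit Arguments. Unset Strict Implicit. Unset Printing Implicit Defensive.
Import Order.TTheory GRing.Theory Num.Theory.
Local Open Scope ring_scope.
Local Open Scope classical_set_scope.
Local Open Scope complex_scope.

Section TSModel.
Variable R : realType.
Local Notation C := R[i].

Definition hconj m n (M : 'M[C]_(m, n)) : 'M[C]_(n, m) := (map_mx (@conjc R) M)^T.

Definition hermitian_psd K (W : 'M[C]_K) : Prop :=
  hconj W = W /\ forall x : 'cV[C]_K, 0 <= (hconj x *m W *m x) 0 0.

Definition abs2 (z : C) : R := complex.Re z ^+ 2 + complex.Im z ^+ 2.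

Definition hcoef K N (f : 'I_N -> 'cV[C]_K) (w1 : 'cV[C]_K) (n : 'I_N) : C :=
  (hconj (f n) *m w1) 0 0.

Definition Hmat K N (po : R) (f : 'I_N -> 'cV[C]_K) (w1 : 'cV[C]_K) : 'M[C]_N :=
  diag_mx (\row_n (abs2 (hcoef f w1 n) / (1 + po * abs2 (hcoef f w1 n)))%:C).

Definition Bmat K N (po : R) (f : 'I_N -> 'cV[C]_K) (w1 : 'cV[C]_K) (g : 'cV[C]_N)
  : 'M[C]_N :=
  diag_mx (\row_n (abs2 (g n 0) / (1 + po * abs2 (hcoef f w1 n)))%:C).

Definition Gmat N (g : 'cV[C]_N) : 'M[C]_N := g *m hconj g.

Definition Amat K N (po : R) (f : 'I_N -> 'cV[C]_K) (w1 : 'cV[C]_K) (g : 'cV[C]_N)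
  : 'M[C]_N := Hmat po f w1 *m Gmat g.

Definition quad N (M : 'M[C]_N) (c : 'I_N -> R) : C :=
  ((\row_n (c n)%:C) *m M *m (\col_n (c n)%:C)) 0 0.

Definition cexpect d (T : measurableType d) (P : probability T R) (X : T -> C) (v : C)
  : Prop :=
  P.-integrable setT (fun x => (complex.Re (X x))%:E) /\
  P.-integrable setT (fun x => (complex.Im (X x))%:E) /\
  (\int[P]_x (complex.Re (X x))%:E = (complex.Re v)%:E)%E /\
  (\int[P]_x (complex.Im (X x))%:E = (complex.Im v)%:E)%E.

Definition has_moments d (T : measurableType d) (P : probability T R) N
  (Z : T -> 'I_N -> C) (u : 'I_N -> C) (S : 'M[C]_N) : Prop :=
  (forall n, measurable_fun setT (fun x => complex.Re (Z x n)) /\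
             measurable_fun setT (fun x => complex.Im (Z x n))) /\
  (forall n, cexpect P (fun x => Z x n) (u n)) /\
  (forall i j, cexpect P (fun x => Z x i * conjc (Z x j)) (S i j)).

(* sup_{P in P(u,S)} P(z in E) <= zeta : every distribution of a random vector
   z in C^N with first moment u and second moment S gives E probability <= zeta.
   (Each such distribution is the law of some random vector Z on some
   probability space, and conversely.) *)
Definition dr_chance_le N (u : 'I_N -> C) (S : 'M[C]_N)
  (E : ('I_N -> C) -> Prop) (zeta : R) : Prop :=
  forall (d : measure_display) (T : measurableType d) (P : probability T R)
         (Z : T -> 'I_N -> C),
    has_moments P Z u S -> (P [set x | E (Z x)] <= zeta%:E)%E.

Definition Omega K N M (po eta zeta : R) (f : 'I_N -> 'cV[C]_K) (g : 'cV[C]_N)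
  (w1 : 'cV[C]_K) (u : 'I_M -> 'I_N -> C) (S : 'I_M -> 'M[C]_N)
  (phibar : 'I_M -> R) (t gamma : R) : Prop :=
  exists (c : 'I_N -> R) (We : 'M[C]_K),
    (forall n, 0 <= c n) /\
    hermitian_psd We /\
    0 <= gamma /\
    gamma%:C <= quad (Amat po f w1 g) c / (1 + quad (Bmat po f w1 g) c) /\
    (0 <= t /\ t <= 1/2) /\
    (forall n, (c n ^+ 2 * t)%:C
                 <= ((1 - 2 * t) * eta * po)%:C * (hconj (f n) *m We *m f n) 0 0) /\
    (forall m, dr_chance_le (u m) (S m)
                 (fun z => phibar m <= \sum_n abs2 (z n) * c n ^+ 2) zeta).

End TSModel.

(* The same relay powers c and energy covariance W_e witness (t', gamma'):
   gamma enters Omega only through the upper bound by the SINR ratio, and t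
   only through the harvesting constraints c_n^2 t <= (1 - 2t) eta p_o f_n^H W_e f_n,
   whose left side grows and whose right side shrinks with t because
   f_n^H W_e f_n >= 0; the chance constraints involve neither t nor gamma. *)
From HB Require Import structures.
From mathcomp Require Import all_boot all_order all_algebra.
From mathcomp Require Import all_classical all_reals all_analysis.
From mathcomp.real_closed Require Import complex.
Import Order.TTheory GRing.Theory Num.Theory.
Local Open Scope ring_scope.
Local Open Scope complex_scope.

Section EnergyConstraint.
Variable R : realType.

Lemma hermitian_psd_quad_ge0 K (W : 'M[R[i]]_K) (x : 'cV[R[i]]_K) :
  hermitian_psd W -> 0 <= (hconj x *m W *m x) 0 0.
Proof. by case=> _; apply. Qed.

Lemma energy_constraint_antitone (x eta po t t' : R) (E : R[i]) :
  0 <= x -> 0 <= eta -> 0 <= po -> 0 <= E -> 0 <= t' <= t ->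
  (x * t)%:C <= ((1 - 2 * t) * eta * po)%:C * E ->
  (x * t')%:C <= ((1 - 2 * t') * eta * po)%:C * E.
Proof.
move=> x0 eta0 po0 E0 /andP[t'0 t't] le_xt.
have le_lhs : ((x * t')%:C : R[i]) <= (x * t)%:C by rewrite lecR ler_wpM2l.
have le_budget : (1 - 2 * t) * eta * po <= (1 - 2 * t') * eta * po.
  by rewrite !ler_wpM2r // lerD2l lerN2 ler_wpM2l.
apply: le_trans le_lhs (le_trans le_xt _).
by rewrite ler_wpM2r // lecR.
Qed.

End EnergyConstraint.

Theorem proposition1 (R : realType) (K N M : nat) (po eta zeta : R)
  (f : 'I_N -> 'cV[R[i]]_K) (g : 'cV[R[i]]_N) (w1 : 'cV[R[i]]_K)
  (u : 'I_M -> 'I_N -> R[i]) (S : 'I_M -> 'M[R[i]]_N) (phibar : 'I_M -> R) :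
  0 < po -> 0 < eta <= 1 -> (forall m, 0 < phibar m) -> 0 < zeta < 1 ->
  forall t gamma t' gamma' : R,
    Omega po eta zeta f g w1 u S phibar t gamma ->
    0 <= t' <= t -> 0 <= gamma' <= gamma ->
    Omega po eta zeta f g w1 u S phibar t' gamma'.
Proof.
move=> po0 /andP[eta0 _] _ _ t gamma t' gamma'
  [c [We [c0 [psd [_ [le_gamma [[_ t_le] [energy chance]]]]]]]]
  t'_range /andP[gamma'0 gamma'_le].
exists c, We; do 4!split=> //.
  by apply: le_trans le_gamma; rewrite lecR.
split; first by case/andP: t'_range => t'0 t't; split=> //; apply: le_trans t_le.
split=> // n; apply: energy_constraint_antitone (energy n) => //.
- exact: sqr_ge0.
- exact: ltW.
- exact: ltW.
- exact: hermitian_psd_quad_ge0.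
Qed.
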